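(* Let $r\ge 3$ and $Y,Z\subseteq\{1,\dots,r-1\}$. (1) The Dynkin diagram of $C_{\Phi_{r,Z}}$ is of type $D'_r$ if $r-1\in Z$ and of type $D_r$ if $r-1\notin Z$. (2) The Dynkin diagram of $C_{\Psi_{r,Y}}$ is of type $C_r$ if $r-1\in Y$ and of type $A_r$ if $r-1\notin Y$.
   Context: In $\mathbb{Z}^r$ with standard basis $\alpha_1,\dots,\alpha_r$ let $\eta_{i,j}=\sum_{k=i}^j\alpha_k$ for $i\le j$ and $\eta_{i,j}=0$ for $i>j$. For $Z\subseteq\{1,\dots,r-1\}$, $\Phi_{r,Z}$ consists of $\eta_{i,j-1}$ ($1\le i<j\le r$), $\eta_{i,r-2}+\alpha_r$ ($1\le i<r$), $\eta_{i,r}+\eta_{j,r-2}$ ($1\le i<j<r$), $\eta_{j,r}+\eta_{j,r-2}$ ($j\in Z$). For $Y\subseteq\{1,\dots,r-1\}$, $\Psi_{r,Y}$ consists of $\eta_{i,j}$ ($1\le i\le j\le r$), $\eta_{i,r}+\eta_{j,r-1}$ ($1\le i<j<r$), $\eta_{j,r}+\eta_{j,r-1}$ ($j\in Y$). For finite $\Lambda\subseteq\mathbb{Z}^r$, $C_\Lambda=(c_{ij})$ has $c_{ii}=2$ and $c_{ij}=-\max\{k\ge0: k\alpha_i+\alpha_j\in\Lambda\}$ for $i\ne j$. Its Dynkin diagram has vertices $1,\dots,r$ with an arrow to $i$ labelled $-c_{ij}$ iff $c_{ij}\ne0$. Type $X_r$ ($X=A,C,D$) means equal to the corresponding finite-type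 Cartan matrix up to relabelling; type $D'_r$: $c_{ij}=c_{ji}=-1$ exactly for the pairs $\{k,k+1\}$ ($1\le k\le r-3$), $\{r-2,r-1\}$, $\{r-2,r\}$, $\{r-1,r\}$, and $c_{ij}=0$ otherwise. *)

From HB Require Import structures.
From mathcomp Require Import all_boot all_order all_algebra all_fingroup.
Set Implicit Arguments. Unset Strict Implicit. Unset Printing Implicit Defensive.
Import Order.TTheory GRing.Theory Num.Theory.
Local Open Scope ring_scope.

(* Z^r is modelled by row vectors 'rV[int]_r.  The standard basis vector
   alpha_a (1-based a in 1..r) has a 1 in (0-based) column a-1. *)

(* eta_{i,j} = sum_{k=i}^j alpha_k (1-based), which is 0 when i > j. *)
Definition eta (r i j : nat) : 'rV[int]_r :=
  \row_(p < r) (if (i <= p.+1 <= j)%N then 1 else 0).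

Definition alpha (r a : nat) : 'rV[int]_r := eta r a a.

Definition Phi (r : nat) (Z : seq nat) : seq 'rV[int]_r :=
  [seq eta r i j.-1 | i <- iota 1 r, j <- iota i.+1 (r - i)]        (* 1 <= i < j <= r *)
  ++ [seq eta r i (r - 2) + alpha r r | i <- iota 1 (r - 1)]
  ++ [seq eta r i r + eta r j (r - 2)
       | i <- iota 1 (r - 1), j <- iota i.+1 (r - 1 - i)]             (* 1 <= i < j < r *)
  ++ [seq eta r j r + eta r j (r - 2) | j <- Z].

Definition Psi (r : nat) (Y : seq nat) : seq 'rV[int]_r :=
  [seq eta r i j | i <- iota 1 r, j <- iota i (r - i).+1]            (* 1 <= i <= j <= r *)
  ++ [seq eta r i r + eta r j (r - 1)
       | i <- iota 1 (r - 1), j <- iota i.+1 (r - 1 - i)]             (* 1 <= i < j < r *)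
  ++ [seq eta r j r + eta r j (r - 1) | j <- Y].

(* An upper bound for the k's with k alpha_i + alpha_j in L (i <> j):
   the i-th coordinate of such a vector is k. *)
Definition kbound (r : nat) (L : seq 'rV[int]_r) : nat :=
  (\sum_(v <- L) \sum_(p < r) `|v ord0 p|%N).+1.

(* The matrix C_Lambda; row/column p : 'I_r corresponds to alpha_{p+1}.
   c_ij = - max{k >= 0 : k alpha_i + alpha_j in L} for i <> j
   (the max of an empty set is taken to be 0; this never occurs below
   since every alpha_j lies in Phi_{r,Z} and Psi_{r,Y}). *)
Definition string_in (r : nat) (L : seq 'rV[int]_r) (k a b : nat) : bool :=
  (k%:Z *: alpha r a + alpha r b) \in L.

Definition cartan (r : nat) (L : seq 'rV[int]_r) : 'M[int]_r :=
  \matrix_(p, q)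
    if p == q then 2
    else - (\max_(k < kbound L | string_in L k p.+1 q.+1) (k : nat))%:Z.

Definition simply_laced (r : nat) (adj : nat -> nat -> bool) : 'M[int]_r :=
  \matrix_(p, q)
    if p == q then 2
    else if adj p.+1 q.+1 || adj q.+1 p.+1 then -1 else 0.

Definition cartan_A (r : nat) : 'M[int]_r :=
  simply_laced r (fun a b => b == a.+1).

(* Type C_r, with the convention c_ij = 2(a_i,a_j)/(a_i,a_i) used by the
   definition of C_Lambda (alpha_r long):  c_{r-1,r} = -2, c_{r,r-1} = -1. *)
Definition cartan_C (r : nat) : 'M[int]_r :=
  \matrix_(p, q)
    if ((p.+1 == r.-1) && (q.+1 == r))%N then -2 else cartan_A r p q.

Definition cartan_D (r : nat) : 'M[int]_r :=
  simply_laced r (fun a b => ((b == a.+1) && (1 <= a <= r - 2)%N)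
                             || ((a == r - 2) && (b == r))%N).

Definition cartan_D' (r : nat) : 'M[int]_r :=
  simply_laced r (fun a b => ((b == a.+1) && (1 <= a <= r - 3)%N)
                             || ((a == r - 2) && (b == r - 1))%N
                             || ((a == r - 2) && (b == r))%N
                             || ((a == r - 1) && (b == r))%N).

Definition of_type (r : nat) (C X : 'M[int]_r) : Prop :=
  exists s : 'S_r, forall p q : 'I_r, C p q = X (s p) (s q).

(* Describe a vector of Z^r by its coordinate profile t |-> f t.  The vector
   k alpha_a + alpha_b has profile k [t = a] + [t = b], supported on at most two
   points, while every root of Phi_{r,Z} and Psi_{r,Y} has the profile of an
   interval or of a sum of two intervals.  Comparing profiles shows that, for
   k >= 1 and a <> b, such a root lies in Phi_{r,Z} only if k = 1 and {a, b} is
   an edge of the path 1 - ... - (r-1), or {r-2, r}, or {r-1, r} with r-1 in Z;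
   and in Psi_{r,Y} only if k = 1 and {a, b} is an edge of the path 1 - ... - r,
   or k = 2, (a, b) = (r-1, r) and r-1 in Y.  This computes both Cartan
   matrices entrywise, and the identity relabelling gives the types. *)

From Pilot Require Import Defs.
From HB Require Import structures.
From mathcomp Require Import all_boot all_order all_algebra all_fingroup.
From mathcomp Require Import zify.
Set Implicit Arguments. Unset Strict Implicit. Unset Printing Implicit Defensive.
Import Order.TTheory GRing.Theory Num.Theory.
Local Open Scope ring_scope.
Local Notation eta := Pilot.Defs.eta.

Definition vec_of r (f : nat -> nat) : 'rV[int]_r := \row_(p < r) (f p.+1)%:Z.

Lemma eta_vec r i j : eta r i j = vec_of r (fun t => (i <= t <= j)%N).
Proof. by apply/rowP => p; rewrite !mxE; case: ifP. Qed.

Lemma vec_ofD r f g : vec_of r f + vec_of r g = vec_of r (fun t => f t + g t)%N.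
Proof. by apply/rowP => p; rewrite !mxE PoszD. Qed.

Lemma vec_of_eq r f g :
  vec_of r f = vec_of r g <-> (forall t, 0 < t <= r -> f t = g t)%N.
Proof.
split=> [/rowP fg t /andP[t_gt0 t_le_r] | fg].
  have t_lt_r : (t.-1 < r)%N by rewrite prednK.
  have := fg (Ordinal t_lt_r); rewrite !mxE /= prednK //.
  by move=> /eqP; rewrite eqz_nat => /eqP.
by apply/rowP => p; rewrite !mxE fg // ltn_ord.
Qed.

Lemma alpha_vec r a : alpha r a = vec_of r (fun t => t == a).
Proof. by rewrite /alpha eta_vec; apply/vec_of_eq => t _; rewrite eqn_leq andbC. Qed.

Lemma string_vec r k a b :
  k%:Z *: alpha r a + alpha r b = vec_of r (fun t => k * (t == a) + (t == b))%N.
Proof. by apply/rowP => p; rewrite /alpha !mxE; do 2 case: ifP; lia. Qed.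

Lemma string1C r (L : seq 'rV[int]_r) a b : string_in L 1 a b = string_in L 1 b a.
Proof. by rewrite /string_in !scale1r addrC. Qed.

Section StringProfiles.
Local Open Scope nat_scope.
Variables (r k a b : nat).
Hypotheses (k_gt0 : 0 < k) (a_neq_b : a != b) (a_le_r : 0 < a <= r) (b_le_r : 0 < b <= r).

Lemma string_support (g : nat -> nat) :
  (forall t, 0 < t <= r -> k * (t == a) + (t == b) = g t) ->
  [/\ g a = k, g b = 1 & forall t, 0 < t <= r -> 0 < g t -> t = a \/ t = b].
Proof.
move=> string_g; have b_neq_a : b != a by rewrite eq_sym.
rewrite -string_g // -string_g // !eqxx (negbTE a_neq_b) (negbTE b_neq_a).
rewrite muln1 muln0 addn0; split=> // t t_range; rewrite -string_g //.
by case: (t =P a) => [|_]; [left | case: (t =P b); [right | rewrite muln0]].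
Qed.

Lemma string_interval i j : 0 < i <= j -> j <= r ->
  (forall t, 0 < t <= r -> k * (t == a) + (t == b) = (i <= t <= j)) ->
  [/\ k = 1, j = i.+1 & (a == i) && (b == i.+1) || (b == i) && (a == i.+1)].
Proof.
move=> i_le_j j_le_r /string_support[/= ga gb supp].
have i_ab : i = a \/ i = b by apply: supp; lia.
have j_ab : j = a \/ j = b by apply: supp; lia.
have i1_ab : i < j -> i.+1 = a \/ i.+1 = b by move=> ?; apply: supp; lia.
by split; lia.
Qed.

Lemma string_Phi_last i : 0 < i <= r - 1 ->
  (forall t, 0 < t <= r -> k * (t == a) + (t == b) = (i <= t <= r - 2) + (t == r)) ->
  [/\ k = 1, i = r - 2 & (a == r - 2) && (b == r) || (b == r - 2) && (a == r)].
Proof.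
move=> i_range /string_support[/= ga gb supp].
have r_ab : r = a \/ r = b by apply: supp; lia.
have i_ab : i <= r - 2 -> i = a \/ i = b by move=> ?; apply: supp; lia.
have m_ab : i <= r - 2 -> r - 2 = a \/ r - 2 = b by move=> ?; apply: supp; lia.
by split; lia.
Qed.

Lemma string_not_pair i j m : 0 < i < j -> j < r ->
  ~ (forall t, 0 < t <= r -> k * (t == a) + (t == b) = (i <= t <= r) + (j <= t <= m)).
Proof.
move=> i_lt_j j_lt_r /string_support[/= ga gb supp].
have i_ab : i = a \/ i = b by apply: supp; lia.
have r1_ab : r - 1 = a \/ r - 1 = b by apply: supp; lia.
have r_ab : r = a \/ r = b by apply: supp; lia.
lia.
Qed.

Lemma string_Phi_double j : 0 < j <= r - 1 ->
  (forall t, 0 < t <= r -> k * (t == a) + (t == b) = (j <= t <= r) + (j <= t <= r - 2)) ->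
  [/\ k = 1, j = r - 1 & (a == r - 1) && (b == r) || (b == r - 1) && (a == r)].
Proof.
move=> j_range /string_support[/= ga gb supp].
have j_ab : j = a \/ j = b by apply: supp; lia.
have r1_ab : r - 1 = a \/ r - 1 = b by apply: supp; lia.
have r_ab : r = a \/ r = b by apply: supp; lia.
by split; lia.
Qed.

Lemma string_Psi_double j : 0 < j <= r - 1 ->
  (forall t, 0 < t <= r -> k * (t == a) + (t == b) = (j <= t <= r) + (j <= t <= r - 1)) ->
  [/\ k = 2, j = r - 1, a = r - 1 & b = r].
Proof.
move=> j_range /string_support[/= ga gb supp].
have j_ab : j = a \/ j = b by apply: supp; lia.
have r1_ab : r - 1 = a \/ r - 1 = b by apply: supp; lia.
have r_ab : r = a \/ r = b by apply: supp; lia.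
by split; lia.
Qed.

End StringProfiles.

Lemma mem_Phi r Z v : v \in Phi r Z ->
  [\/ exists i j, [/\ 0 < i <= j, j <= r - 1 & v = eta r i j],
      exists i, 0 < i <= r - 1 /\ v = (eta r i (r - 2) + alpha r r)%R,
      exists i j, [/\ 0 < i < j, j < r & v = (eta r i r + eta r j (r - 2))%R]
    | exists j, j \in Z /\ v = (eta r j r + eta r j (r - 2))%R]%N.
Proof.
rewrite !mem_cat => /or4P[/allpairsPdep[i [j [+ + ->]]] | /mapP[i + ->]
                         | /allpairsPdep[i [j [+ + ->]]] | /mapP[j + ->]].
- by rewrite !mem_iota => *; apply: Or41; exists i, j.-1; split=> //; lia.
- by rewrite !mem_iota => *; apply: Or42; exists i; split=> //; lia.
- by rewrite !mem_iota => *; apply: Or43; exists i, j; split=> //; lia.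
- by move=> *; apply: Or44; exists j.
Qed.

Lemma mem_Psi r Y v : v \in Psi r Y ->
  [\/ exists i j, [/\ 0 < i <= j, j <= r & v = eta r i j],
      exists i j, [/\ 0 < i < j, j < r & v = (eta r i r + eta r j (r - 1))%R]
    | exists j, j \in Y /\ v = (eta r j r + eta r j (r - 1))%R]%N.
Proof.
rewrite !mem_cat => /or3P[/allpairsPdep[i [j [+ + ->]]]
                         | /allpairsPdep[i [j [+ + ->]]] | /mapP[j + ->]].
- by rewrite !mem_iota => *; apply: Or31; exists i, j; split=> //; lia.
- by rewrite !mem_iota => *; apply: Or32; exists i, j; split=> //; lia.
- by move=> *; apply: Or33; exists j.
Qed.

Lemma mem_Phi_interval r Z i j : (0 < i <= j)%N -> (j < r)%N -> eta r i j \in Phi r Z.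
Proof.
move=> *; rewrite mem_cat (_ : j = j.+1.-1) //; apply/orP; left.
by apply/allpairsPdep; exists i, j.+1; rewrite !mem_iota; split=> //; lia.
Qed.

Lemma mem_Phi_last r Z i : (0 < i <= r - 1)%N -> eta r i (r - 2) + alpha r r \in Phi r Z.
Proof.
by move=> *; rewrite !mem_cat (map_f (fun i => _)) ?orbT // mem_iota; lia.
Qed.

Lemma mem_Phi_double r Z j : j \in Z -> eta r j r + eta r j (r - 2) \in Phi r Z.
Proof. by move=> *; rewrite !mem_cat (map_f (fun j => _)) ?orbT. Qed.

Lemma mem_Psi_interval r Y i j : (0 < i <= j)%N -> (j <= r)%N -> eta r i j \in Psi r Y.
Proof.
move=> *; rewrite mem_cat; apply/orP; left.
by apply/allpairsPdep; exists i, j; rewrite !mem_iota; split=> //; lia.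
Qed.

Lemma mem_Psi_double r Y j : j \in Y -> eta r j r + eta r j (r - 1) \in Psi r Y.
Proof. by move=> *; rewrite !mem_cat (map_f (fun j => _)) ?orbT. Qed.

Definition Phi_adj r (Z : seq nat) a b : bool :=
  [|| (b == a.+1) && (b <= r - 1), (a == r - 2) && (b == r)
    | [&& a == r - 1, b == r & r - 1 \in Z]]%N.

Definition Psi_mult r (Y : seq nat) a b : nat :=
  (if [&& a == r - 1, b == r & r - 1 \in Y] then 2 else (b == a.+1) || (a == b.+1))%N.

Lemma kbound_gt2 r (L : seq 'rV[int]_r) : (2 <= r)%N -> eta r 1 2 \in L -> (2 < kbound L)%N.
Proof.
case: r L => [|[|r]] // L _ L12; rewrite /kbound ltnS (big_rem _ L12) /=.
by rewrite 2!big_ord_recl !mxE /= addnA leq_addr.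
Qed.

Lemma cartan_offdiag r (L : seq 'rV[int]_r) (p q : 'I_r) (m : nat) :
  p != q -> (m < kbound L)%N -> (0 < m -> string_in L m p.+1 q.+1)%N ->
  (forall k, string_in L k p.+1 q.+1 -> k <= m)%N -> cartan L p q = - m%:Z.
Proof.
move=> pq m_lt m_string m_max; rewrite mxE (negbTE pq); congr (- (Posz _)).
apply/eqP; rewrite eqn_leq; apply/andP; split; first by apply/bigmax_leqP => k /m_max.
case: m m_lt m_string {m_max} => // m m_lt m_string.
exact: (leq_bigmax_cond (Ordinal m_lt) (m_string isT)).
Qed.

Lemma eq_simply_laced r (f g : nat -> nat -> bool) :
  (forall a b, 0 < a <= r -> 0 < b <= r -> f a b = g a b)%N ->
  simply_laced r f = simply_laced r g.
Proof. by move=> fg; apply/matrixP => p q; rewrite !mxE !fg ?ltn_ord. Qed.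

Section RootStrings.
Variables (r : nat) (Y Z : seq nat).
Hypotheses (r_ge3 : (3 <= r)%N) (Y_range : forall j, j \in Y -> (1 <= j <= r - 1)%N)
  (Z_range : forall j, j \in Z -> (1 <= j <= r - 1)%N).

Lemma Phi_string_le k a b : a != b -> (0 < a <= r)%N -> (0 < b <= r)%N ->
  string_in (Phi r Z) k a b -> (k <= Phi_adj r Z a b || Phi_adj r Z b a)%N.
Proof.
move=> ab a_range b_range; case: k => [//|k].
rewrite /string_in string_vec.
case/mem_Phi => [[i [j [ij j_lt e]]] | [i [i_range e]]
               | [i [j [ij j_lt e]]] | [j [jZ e]]]; move: e;
  rewrite ?alpha_vec !eta_vec ?vec_ofD => /vec_of_eq prof.
- have [k1 j_eq ab_i] := string_interval (ltn0Sn k) ab a_range b_range ij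
    (leq_trans j_lt (leq_subr 1 r)) prof.
  by rewrite /Phi_adj; lia.
- have [k1 i_eq ab_r] := string_Phi_last (ltn0Sn k) ab a_range b_range i_range prof.
  by rewrite /Phi_adj; lia.
- by case: (string_not_pair (ltn0Sn k) ab a_range b_range ij j_lt prof).
- have [k1 j_eq ab_r] := string_Phi_double (ltn0Sn k) ab a_range b_range (Z_range jZ) prof.
  by move: jZ; rewrite j_eq /Phi_adj => ->; lia.
Qed.

Lemma Psi_string_le k a b : a != b -> (0 < a <= r)%N -> (0 < b <= r)%N ->
  string_in (Psi r Y) k a b -> (k <= Psi_mult r Y a b)%N.
Proof.
move=> ab a_range b_range; case: k => [//|k].
rewrite /string_in string_vec.
case/mem_Psi => [[i [j [ij j_le e]]] | [i [j [ij j_lt e]]] | [j [jY e]]]; move: e;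
  rewrite !eta_vec ?vec_ofD => /vec_of_eq prof.
- have [k1 j_eq ab_i] := string_interval (ltn0Sn k) ab a_range b_range ij j_le prof.
  by rewrite /Psi_mult; case: ifP; lia.
- by case: (string_not_pair (ltn0Sn k) ab a_range b_range ij j_lt prof).
- have [-> j_eq -> ->] := string_Psi_double (ltn0Sn k) ab a_range b_range (Y_range jY) prof.
  by move: jY; rewrite j_eq /Psi_mult !eqxx => ->.
Qed.

Lemma Phi_adj_string a b : (0 < a)%N -> (b <= r)%N ->
  Phi_adj r Z a b -> string_in (Phi r Z) 1 a b.
Proof.
move=> a_gt0 b_le_r; rewrite /string_in string_vec.
case/or3P => [/andP[/eqP-> b_lt] | /andP[/eqP-> /eqP->] | /and3P[/eqP-> /eqP-> r1Z]].
- rewrite (_ : vec_of _ _ = eta r a a.+1); first by apply: mem_Phi_interval; lia.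
  by rewrite eta_vec; apply/vec_of_eq => t _; lia.
- rewrite (_ : vec_of _ _ = eta r (r - 2) (r - 2) + alpha r r); first by apply: mem_Phi_last; lia.
  by rewrite alpha_vec !eta_vec vec_ofD; apply/vec_of_eq => t _; lia.
- rewrite (_ : vec_of _ _ = eta r (r - 1) r + eta r (r - 1) (r - 2)); first exact: mem_Phi_double.
  by rewrite !eta_vec vec_ofD; apply/vec_of_eq => t _; lia.
Qed.

Lemma Psi_mult_string a b : (0 < a)%N -> (0 < b)%N -> (a <= r)%N -> (b <= r)%N ->
  (0 < Psi_mult r Y a b)%N -> string_in (Psi r Y) (Psi_mult r Y a b) a b.
Proof.
move=> a_gt0 b_gt0 a_le_r b_le_r; rewrite /Psi_mult /string_in string_vec.
case: ifP => [/and3P[/eqP-> /eqP-> r1Y] _ | _ /[!lt0b]].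
  rewrite (_ : vec_of _ _ = eta r (r - 1) r + eta r (r - 1) (r - 1)); first exact: mem_Psi_double.
  by rewrite !eta_vec vec_ofD; apply/vec_of_eq => t _; lia.
case/orP => /eqP ab_succ; subst.
  rewrite (_ : vec_of _ _ = eta r a a.+1); first by apply: mem_Psi_interval; lia.
  by rewrite eta_vec; apply/vec_of_eq => t _; lia.
rewrite (_ : vec_of _ _ = eta r b b.+1); first by apply: mem_Psi_interval; lia.
by rewrite eta_vec; apply/vec_of_eq => t _; lia.
Qed.

Lemma cartan_Phi :
  cartan (Phi r Z) = simply_laced r (Phi_adj r Z).
Proof.
apply/matrixP => p q; rewrite [RHS]mxE.
have [<-|pq] := eqVneq p q; first by rewrite mxE eqxx.
have ab : p.+1 != q.+1 by rewrite eqSS.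
have [p_lt q_lt] := (ltn_ord p, ltn_ord q).
rewrite (@cartan_offdiag _ _ _ _ (Phi_adj r Z p.+1 q.+1 || Phi_adj r Z q.+1 p.+1)) //.
- by case: (_ || _).
- apply: leq_trans (kbound_gt2 _ _); [by case: (_ || _) | lia |].
  by apply: mem_Phi_interval; lia.
- rewrite lt0b => /orP[adj | adj].
    by rewrite adj; apply: Phi_adj_string.
  by rewrite adj orbT string1C; apply: Phi_adj_string.
- by move=> k; apply: Phi_string_le.
Qed.

Lemma cartan_Psi :
  cartan (Psi r Y) =
  \matrix_(p, q) if [&& p.+1 == r - 1, q.+1 == r & r - 1 \in Y]%N then -2 else cartan_A r p q.
Proof.
apply/matrixP => p q; rewrite [RHS]mxE.
have [p_lt q_lt] := (ltn_ord p, ltn_ord q).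
have [<-|pq] := eqVneq p q.
  by rewrite !mxE eqxx; case: ifP => // /and3P[/eqP + /eqP]; lia.
have ab : p.+1 != q.+1 by rewrite eqSS.
rewrite (@cartan_offdiag _ _ _ _ (Psi_mult r Y p.+1 q.+1)) //.
- by rewrite /Psi_mult !mxE (negbTE pq); case: ifP => //; case: (_ || _).
- apply: leq_trans (kbound_gt2 _ _); last by apply: mem_Psi_interval; lia.
    by rewrite /Psi_mult; case: ifP => // _; case: (_ || _).
  lia.
- by apply: Psi_mult_string.
- by move=> k; apply: Psi_string_le.
Qed.

Lemma cartan_Phi_D' : (r - 1)%N \in Z ->
  cartan (Phi r Z) = cartan_D' r.
Proof.
move=> r1Z; rewrite cartan_Phi; apply: eq_simply_laced => a b *.
by rewrite /Phi_adj r1Z; lia.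
Qed.

Lemma cartan_Phi_D : (r - 1)%N \notin Z ->
  cartan (Phi r Z) = cartan_D r.
Proof.
move=> r1Z; rewrite cartan_Phi; apply: eq_simply_laced => a b *.
by rewrite /Phi_adj (negbTE r1Z) !andbF; lia.
Qed.

Lemma cartan_Psi_C : (r - 1)%N \in Y ->
  cartan (Psi r Y) = cartan_C r.
Proof.
by move=> r1Y; rewrite cartan_Psi; apply/matrixP => p q; rewrite !mxE r1Y andbT subn1.
Qed.

Lemma cartan_Psi_A : (r - 1)%N \notin Y ->
  cartan (Psi r Y) = cartan_A r.
Proof.
by move=> r1Y; rewrite cartan_Psi; apply/matrixP => p q; rewrite mxE (negbTE r1Y) !andbF.
Qed.

End RootStrings.

Lemma of_type_refl r (C : 'M[int]_r) : of_type C C.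
Proof. by exists 1%g => p q; rewrite !perm1. Qed.

Theorem proposition3p11 (r : nat) (Y Z : seq nat) :
  (3 <= r)%N ->
  (forall j, j \in Y -> (1 <= j <= r - 1)%N) ->
  (forall j, j \in Z -> (1 <= j <= r - 1)%N) ->
  (((r - 1)%N \in Z -> cartan (Phi r Z) = cartan_D' r) /\
   ((r - 1)%N \notin Z -> of_type (cartan (Phi r Z)) (cartan_D r))) /\
  (((r - 1)%N \in Y -> of_type (cartan (Psi r Y)) (cartan_C r)) /\
   ((r - 1)%N \notin Y -> of_type (cartan (Psi r Y)) (cartan_A r))).
Proof.
move=> r_ge3 Y_range Z_range; split; split=> r1.
- exact: cartan_Phi_D'.
- by rewrite cartan_Phi_D //; apply: of_type_refl.
- by rewrite cartan_Psi_C //; apply: of_type_refl.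
- by rewrite cartan_Psi_A //; apply: of_type_refl.
Qed.
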